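(* For any permutation $\sigma\in\mathrm{Sym}(n)$, the cyclic group $G=\langle\sigma\rangle\leq\mathrm{Sym}(n)$, with its natural action on $\{1,\dots,n\}$, has the strict EKR property.
   Context: Two permutations $\pi,\tau\in G$ intersect if $\pi\tau^{-1}$ has a fixed point in $\{1,\dots,n\}$. A subset of $G$ is intersecting if every pair of its elements intersect. $G$ has the EKR property if every intersecting subset of $G$ has size at most the size of the largest point-stabilizer in $G$. $G$ has the strict EKR property if it has the EKR property and the only intersecting subsets of maximum size in $G$ are the cosets of the (largest) point-stabilizers. *)

From mathcomp Require Import all_boot all_fingroup.
Set Implicit Arguments. Unset Strict Implicit. Unset Printing Implicit Defensive.
Import GroupScope.

(* pi and tau intersect iff pi * tau^-1 has a fixed point in {0,...,n-1}
   (mathcomp's product: (p * t) x = t (p x)). *)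
Definition perm_intersect (n : nat) (p t : {perm 'I_n}) : bool :=
  [exists i : 'I_n, (p * t^-1) i == i].

Definition intersecting (n : nat) (G S : {set {perm 'I_n}}) : bool :=
  (S \subset G) && [forall p in S, forall t in S, perm_intersect p t].

Definition max_stab (n : nat) (G : {group {perm 'I_n}}) : nat :=
  \max_(i : 'I_n) #|'C_G[i | 'P]|.

Definition EKR (n : nat) (G : {group {perm 'I_n}}) : Prop :=
  forall S : {set {perm 'I_n}}, intersecting G S -> #|S| <= max_stab G.

Definition strict_EKR (n : nat) (G : {group {perm 'I_n}}) : Prop :=
  EKR G /\
  forall S : {set {perm 'I_n}}, intersecting G S -> #|S| = max_stab G ->
    exists i : 'I_n, exists2 g, g \in G &
      #|'C_G[i | 'P]| = max_stab G /\ S = g *: 'C_G[i | 'P].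

From mathcomp Require Import all_boot all_fingroup.
From mathcomp Require Import cyclic zify.
Set Implicit Arguments. Unset Strict Implicit. Unset Printing Implicit Defensive.
Import GroupScope.

(* Let G = <s> have order m, let M be the largest stabilizer order and k = m / M.
   If s^j fixed a point for some 0 < j < k, the stabilizer of that point would
   contain <s^j>, of order m / gcd(m, j) >= m / j > M; so s, ..., s^(k-1) are
   fixed-point-free.  Since G is abelian, a, b in an intersecting set S differ by
   a permutation with a fixed point, hence the k right translates S s^j, j < k,
   are pairwise disjoint in G, and k |S| <= m, i.e. |S| <= M.  If |S| = M they
   tile G, which forces S s^k = S, so S is a coset of <s^k>; this subgroup has
   order M, hence is the maximal stabilizer, as G is cyclic. *)

Lemma max_stab_attained (n : nat) (G : {group {perm 'I_n}}) :
  0 < n -> exists i : 'I_n, #|'C_G[i | 'P]| = max_stab G.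
Proof.
move=> n_gt0.
have [i max_i] := @eq_bigmax 'I_n (fun i => #|'C_G[i | 'P]|) (ltac:(by rewrite card_ord)).
by exists i; rewrite /max_stab max_i.
Qed.

Lemma card_astab1_le_max_stab (n : nat) (G : {group {perm 'I_n}}) (x : 'I_n) :
  #|'C_G[x | 'P]| <= max_stab G.
Proof. exact: (@leq_bigmax _ (fun i => #|'C_G[i | 'P]|)). Qed.

Lemma order_leq_orderX_mul (gT : finGroupType) (a : gT) (j : nat) :
  0 < j -> (#[a] <= #[a ^+ j] * j)%N.
Proof.
move=> j_gt0; rewrite orderXgcd.
have g_dvd := dvdn_gcdl #[a] j.
have g_le : gcdn #[a] j <= j := dvdn_leq j_gt0 (dvdn_gcdr _ _).
by rewrite -{1}(divnK g_dvd) leq_mul2l g_le orbT.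
Qed.

Section CyclicEKR.

Variables (n : nat) (s : {perm 'I_n}).
Hypothesis n_gt0 : 0 < n.

Let M := max_stab <[s]>%G.
Let k := #[s] %/ M.

Lemma max_stab_dvd_order : M %| #[s].
Proof.
rewrite /M; have [i <-] := max_stab_attained <[s]>%G n_gt0.
exact: cardSg (subsetIl _ _).
Qed.

Lemma max_stab_mul_index : (M * k)%N = #[s].
Proof. by rewrite /k mulnC divnK // max_stab_dvd_order. Qed.

Lemma index_max_stab_gt0 : 0 < k.
Proof. by have := order_gt0 s; rewrite -max_stab_mul_index muln_gt0 => /andP[]. Qed.

Lemma expg_fixpoint_free (j : nat) (x : 'I_n) : 0 < j < k -> (s ^+ j) x != x.
Proof.
case/andP=> j_gt0; rewrite ltn_divRL ?max_stab_dvd_order // => jM_lt.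
apply/negP => /eqP fix_x.
have sj_stab : s ^+ j \in 'C_(<[s]>%G)[x | 'P].
  by rewrite in_setI mem_cycle; apply/astab1P.
have orderX_le : #[s ^+ j] <= M.
  apply: leq_trans (card_astab1_le_max_stab _ x).
  by apply: subset_leq_card; rewrite cycle_subG.
have := order_leq_orderX_mul s j_gt0.
apply/negP; rewrite -ltnNge; apply: leq_ltn_trans jM_lt.
by rewrite mulnC leq_mul2l orderX_le orbT.
Qed.

Lemma intersecting_neq_mulX (S : {set {perm 'I_n}}) (a b : {perm 'I_n}) (j : nat) :
  intersecting <[s]>%G S -> a \in S -> b \in S -> 0 < j < k -> a != b * s ^+ j.
Proof.
case/andP=> sSG /forall_inP S_int aS bS j_range; apply/eqP => def_a.
have [t def_b] : exists t, b = s ^+ t by apply/cycleP; apply: (subsetP sSG).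
have /existsP[x /eqP] := forall_inP (S_int a aS) b bS.
rewrite def_a def_b -expgD addnC expgD mulgK.
by apply/eqP; apply: expg_fixpoint_free.
Qed.

Definition shift_pair (p : {perm 'I_n} * 'I_k) : {perm 'I_n} := p.1 * s ^+ p.2.

Definition shifts (S : {set {perm 'I_n}}) : {set {perm 'I_n}} :=
  shift_pair @: setX S [set: 'I_k].

Lemma card_shifts (S : {set {perm 'I_n}}) :
  intersecting <[s]>%G S -> #|shifts S| = (#|S| * k)%N.
Proof.
move=> S_int; rewrite card_in_imset ?cardsX ?cardsT ?card_ord //.
have no_shift a b (i j : 'I_k) : a \in S -> b \in S -> i < j ->
    a * s ^+ i != b * s ^+ j.
  move=> aS bS lt_ij; apply/eqP => eq_ab.
  have def_a : a = b * s ^+ (j - i).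
    by apply: (mulIg (s ^+ i)); rewrite eq_ab -mulgA -expgD subnK // ltnW.
  have ji_range : 0 < j - i < k by have := ltn_ord j; lia.
  by move: (intersecting_neq_mulX S_int aS bS ji_range); rewrite -def_a eqxx.
move=> [a i] [b j]; rewrite !inE /= => /andP[aS _] /andP[bS _].
rewrite /shift_pair /= => eq_ab.
have eq_ij : i = j.
  apply: val_inj; case: (ltngtP i j) => // [lt_ij | lt_ji].
  - by case/negP: (no_shift a b i j aS bS lt_ij); apply/eqP.
  - by case/negP: (no_shift b a j i bS aS lt_ji); apply/eqP.
by rewrite -eq_ij in eq_ab *; rewrite (mulIg _ _ _ eq_ab).
Qed.

Lemma shifts_sub (S : {set {perm 'I_n}}) :
  S \subset <[s]> -> shifts S \subset <[s]>.
Proof.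
move=> sSG; apply/subsetP => y /imsetP[[a j]]; rewrite !inE /= => /andP[aS _] ->.
by rewrite groupM ?mem_cycle // (subsetP sSG).
Qed.

Lemma intersecting_card_le (S : {set {perm 'I_n}}) :
  intersecting <[s]>%G S -> #|S| <= M.
Proof.
move=> S_int; have := subset_leq_card (shifts_sub (proj1 (andP S_int))).
by rewrite card_shifts // -/(order s) -max_stab_mul_index leq_pmul2r ?index_max_stab_gt0.
Qed.

Lemma max_intersecting_mulX_closed (S : {set {perm 'I_n}}) (a : {perm 'I_n}) :
  intersecting <[s]>%G S -> #|S| = M -> a \in S -> a * s ^+ k \in S.
Proof.
move=> S_int cardS aS; have sSG := proj1 (andP S_int).
have shifts_full : shifts S = <[s]>.
  apply/eqP; rewrite eqEcard shifts_sub // card_shifts // cardS.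
  by rewrite max_stab_mul_index; exact: leqnn.
have : a * s ^+ k \in shifts S.
  by rewrite shifts_full groupM ?mem_cycle // (subsetP sSG).
case/imsetP=> [[b j]]; rewrite !inE /= => /andP[bS _]; rewrite /shift_pair /=.
have [-> | j_gt0] := posnP j; first by rewrite expg0 mulg1 => ->.
move=> eq_ab; have kj_range : 0 < k - j < k by have := ltn_ord j; lia.
have def_b : b = a * s ^+ (k - j).
  by apply: (mulIg (s ^+ j)); rewrite -eq_ab -mulgA -expgD subnK // ltnW.
by move: (intersecting_neq_mulX S_int bS aS kj_range); rewrite -def_b eqxx.
Qed.

Lemma card_cycle_expX_index : #|<[s ^+ k]>| = M.
Proof.
have k_dvd : k %| #[s] by rewrite -max_stab_mul_index dvdn_mull.
by rewrite -/(order _) orderXdiv // -max_stab_mul_index mulnK ?index_max_stab_gt0.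
Qed.

Lemma max_intersecting_coset (S : {set {perm 'I_n}}) (a : {perm 'I_n}) :
  intersecting <[s]>%G S -> #|S| = M -> a \in S -> S = a *: <[s ^+ k]>.
Proof.
move=> S_int cardS aS.
have coset_sub : a *: <[s ^+ k]> \subset S.
  apply/subsetP => y /lcosetP[z /cycleP[t ->] ->]; rewrite -expgM.
  elim: t => [|t IHt]; first by rewrite muln0 expg0 mulg1.
  by rewrite mulnSr expgD mulgA max_intersecting_mulX_closed.
apply/eqP; rewrite eq_sym eqEcard coset_sub card_lcoset.
by rewrite card_cycle_expX_index cardS leqnn.
Qed.

Lemma max_stab_eq_cycle_expX (i : 'I_n) :
  #|'C_(<[s]>%G)[i | 'P]| = M -> 'C_(<[s]>%G)[i | 'P] = <[s ^+ k]>.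
Proof.
move=> card_stab; apply/eqP.
rewrite (@eq_subG_cyclic _ <[s]>%G) ?cycle_cyclic ?subsetIl //=.
  by rewrite card_stab card_cycle_expX_index.
by rewrite cycle_subG mem_cycle.
Qed.

End CyclicEKR.

Theorem theorem5 (n : nat) (s : {perm 'I_n}) :
  (0 < n)%N -> strict_EKR <[s]>%G.
Proof.
move=> n_gt0; split=> [S|S S_int cardS]; first exact: intersecting_card_le.
have [i card_stab] := max_stab_attained <[s]>%G n_gt0.
have /card_gt0P[a aS] : 0 < #|S| by rewrite cardS -card_stab cardG_gt0.
exists i, a; first exact: subsetP (proj1 (andP S_int)) a aS.
split=> //.
by rewrite max_stab_eq_cycle_expX // (max_intersecting_coset n_gt0 S_int cardS aS).
Qed.
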